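(* Let $k$ be a positive integer, $q\in\mathbb C\setminus\{0\}$, and let $\nu_1,\dots,\nu_k$ be commuting variables; work in the commutative algebra obtained from $\mathbb C[\nu_1,\dots,\nu_k]$ by inverting all differences $\nu_{r_1}-\nu_{r_2}$, $1\le r_1<r_2\le k$. Let $e_i:=e_i(\nu_1,\dots,\nu_k)$ for $0\le i\le k$ and $e_i:=0$ for $i>k$, and define $\mathfrak p'_1,\mathfrak p'_2,\dots$ recursively by $$\sum_{i=0}^{m-1}(-q)^ie_i\,\mathfrak p'_{m-i}=(-1)^{m-1}m_q\,e_m,\qquad m=1,2,\dots.$$ Then, with $\delta_j:=\prod_{r=1,\,r\ne j}^{k}\frac{\nu_j-q^{-2}\nu_r}{\nu_j-\nu_r}$, $$\mathfrak p'_i=q^{i-1}\sum_{j=1}^k\delta_j\,\nu_j^{\,i}\quad (i=1,2,\dots),\qquad\text{and}\qquad q^{-1}\sum_{j=1}^k\delta_j=q^{-k}k_q.$$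
   Context: $e_i(\nu_1,\dots,\nu_k)$ is the $i$-th elementary symmetric polynomial ($e_0=1$). For an integer $m\ge0$, $m_q:=q^{m-1}+q^{m-3}+\dots+q^{1-m}$. *)

From mathcomp Require Import all_boot all_order all_algebra.
Set Implicit Arguments. Unset Strict Implicit. Unset Printing Implicit Defensive.
Import Order.TTheory GRing.Theory Num.Theory.
Local Open Scope ring_scope.

(* i-th elementary symmetric polynomial evaluated at nu_1..nu_k;
   automatically 0 for i > k and 1 for i = 0. *)
Definition elsym (R : comNzRingType) (k : nat) (nu : 'I_k -> R) (i : nat) : R :=
  \sum_(I : {set 'I_k} | #|I| == i) \prod_(j in I) nu j.

Definition qint (R : comUnitRingType) (q : R) (m : nat) : R :=
  \sum_(i < m) q ^ ((m.-1)%:Z - (2 * i)%:Z).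

Definition delta (R : comUnitRingType) (q : R) (k : nat) (nu : 'I_k -> R)
  (j : 'I_k) : R :=
  \prod_(r < k | r != j) ((nu j - q ^- 2 * nu r) / (nu j - nu r)).

From mathcomp Require Import all_boot all_order all_algebra ring.
Import Order.TTheory GRing.Theory Num.Theory.
Set Implicit Arguments. Unset Strict Implicit. Unset Printing Implicit Defensive.
Local Open Scope ring_scope.

(* Put t = q^-2 and f_j(m) = e_m of the family with nu_j removed.  The polynomial
   sum_j c_j prod_(r <> j) (y + nu_r) = sum_m (sum_j c_j f_j(m)) y^(k-1-m)
   has degree < k and takes the value c_j prod_(r <> j) (nu_r - nu_j) at the k
   distinct points y = -nu_j, so these values determine every sum_j c_j f_j(m).
   For c = delta and c_j = delta_j nu_j, Vieta and a summation by parts give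
     sum_j delta_j f_j(m)      = (t^m + ... + t^(k-1)) e_m,
     sum_j delta_j nu_j f_j(m) = (1 + ... + t^m) e_(m+1).
   Since sum_(i<=m) (-1)^i e_i nu_j^(m+1-i) = (-1)^m nu_j f_j(m), the second
   identity says that the claimed p'_i solve the recursion, which is triangular
   with leading coefficient e_0 = 1, hence has a unique solution; the first one
   at m = 0 gives sum_j delta_j. *)

Section ElementarySymmetric.
Variables (R : comNzRingType) (k : nat) (nu : 'I_k -> R).

Definition elsym_in (S : {set 'I_k}) (m : nat) : R :=
  \sum_(I : {set 'I_k} | (I \subset S) && (#|I| == m)) \prod_(j in I) nu j.

Lemma elsym_setT m : elsym nu m = elsym_in setT m.
Proof. by apply: eq_bigl => I; rewrite subsetT. Qed.

Lemma elsym_in0 (S : {set 'I_k}) : elsym_in S 0 = 1.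
Proof.
rewrite /elsym_in (big_pred1 set0) ?big_set0 // => I /=.
rewrite cards_eq0; apply/idP/eqP => [/andP[_ /eqP]//| ->].
by rewrite sub0set eqxx.
Qed.

Lemma elsym_in_gt_card (S : {set 'I_k}) m : (#|S| < m)%N -> elsym_in S m = 0.
Proof.
move=> ltSm; rewrite /elsym_in big_pred0 // => I.
apply/negbTE/andP => -[/subset_leq_card leIS /eqP cardI].
by move: leIS; rewrite cardI leqNgt ltSm.
Qed.

Lemma elsym_inD1 (S : {set 'I_k}) j m : j \in S ->
  elsym_in S m.+1 = elsym_in (S :\ j) m.+1 + nu j * elsym_in (S :\ j) m.
Proof.
move=> jS; rewrite /elsym_in (bigID (fun I : {set 'I_k} => j \in I)) /= addrC.
congr (_ + _); first by apply: eq_bigl => I; rewrite subsetD1 andbAC.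
rewrite mulr_sumr (reindex_onto (fun J => j |: J) (fun I => I :\ j)) /=; last first.
  by move=> I /andP[_ jI]; rewrite setD1K.
apply: eq_big => J.
  rewrite setU11 andbT subUset sub1set jS /=.
  case jJ: (j \in J).
    have -> : ((j |: J) :\ j == J) = false.
      by apply/negbTE; apply: contraTneq jJ => <-; rewrite setD11.
    by rewrite andbF subsetD1 jJ andbF.
  by rewrite setU1K ?jJ // eqxx andbT cardsU1 jJ add1n eqSS subsetD1 jJ andbT.
move=> /andP[_ /eqP <-].
by rewrite big_setU1 ?setD11.
Qed.

Lemma prod_elsym_in n (S : {set 'I_k}) (y c : R) : #|S| = n ->
  \prod_(r in S) (y + c * nu r) =
  \sum_(m < n.+1) c ^+ m * elsym_in S m * y ^+ (n - m).
Proof.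
elim: n S => [|n IH] S cardS.
  move/eqP: cardS; rewrite cards_eq0 => /eqP ->.
  by rewrite big_set0 big_ord1 elsym_in0 !mulr1.
have [j jS] : exists j, j \in S by apply/card_gt0P; rewrite cardS.
have cardSj : #|S :\ j| = n by move: (cardsD1 j S); rewrite jS cardS add1n => -[].
rewrite (big_setD1 j jS) /= (IH (S :\ j)) // mulrDl.
set s := \sum_(m < n.+1) _.
rewrite [RHS]big_ord_recl /= elsym_in0 mulr1 subn0 expr0 mul1r.
under [X in _ = _ + X]eq_bigr => i _ do
  rewrite /bump /= add1n subSS (elsym_inD1 _ jS) mulrDr mulrDl.
rewrite big_split /= addrA; congr (_ + _); last first.
  by rewrite /s mulr_sumr; apply: eq_bigr => i _; rewrite exprS; ring.
rewrite /s big_ord_recl [in RHS]big_ord_recr /=.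
rewrite (@elsym_in_gt_card (S :\ j) n.+1) ?cardSj // mulr0 mul0r addr0.
rewrite mulrDr elsym_in0 subn0 expr0 !mul1r -exprS; congr (_ + _).
rewrite mulr_sumr; apply: eq_bigr => i _ /=; rewrite /bump /= add1n.
by rewrite -(subnSK (ltn_ord i)) [y ^+ (_).+1]exprS; ring.
Qed.

End ElementarySymmetric.

Lemma vandermonde_coef_eq0 (R : comUnitRingType) n (x : 'I_n.+1 -> R)
    (a : nat -> R) :
  (forall i j, i != j -> x i - x j \is a GRing.unit) ->
  (forall j, \sum_(m < n.+1) a m * x j ^+ (n - m) = 0) ->
  forall m, (m <= n)%N -> a m = 0.
Proof.
move=> unit_x vanish m le_mn.
pose P := \poly_(i < n.+1) a (n - i)%N.
have rootP : all (root P) [seq x j | j <- enum 'I_n.+1].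
  apply/allP => _ /mapP[j _ ->]; rewrite /root horner_poly -[eqbRHS](vanish j).
  rewrite (reindex_inj rev_ord_inj) /=.
  by apply/eqP; apply: eq_bigr => i _; rewrite subSS subKn // -ltnS.
have uniq_x : uniq_roots [seq x j | j <- enum 'I_n.+1].
  have : uniq (enum 'I_n.+1) := enum_uniq _.
  elim: (enum 'I_n.+1) => //= j l IH /andP[jl ul]; rewrite IH // andbT.
  apply/allP => _ /mapP[r rl ->]; rewrite /diff_roots mulrC eqxx /=.
  by apply: unit_x; apply: contraNneq jl => <-.
have P0 : P = 0.
  apply/eqP; apply: contraTT (leqnn n.+1) => nzP; rewrite -ltnNge.
  have := max_ring_poly_roots nzP rootP uniq_x.
  by rewrite size_map size_enum_ord => /leq_trans; apply; apply: size_poly.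
have := coef_poly n.+1 (fun i => a (n - i)%N) (n - m).
by rewrite -/P P0 coef0 ltnS leq_subr subKn.
Qed.

Lemma summation_by_parts (R : comPzRingType) (A f g : nat -> R) (y : R) n :
  g 0%N = f 0%N -> (forall i, g i.+1 = f i.+1 - y * f i) ->
  \sum_(m < n.+1) A m * g m * y ^+ (n - m)
  = \sum_(m < n.+1) (A m - A m.+1) * f m * y ^+ (n - m) + A n.+1 * f n.
Proof.
move=> g0 gS; elim: n => [|n IH]; first by rewrite !big_ord1 /= g0; ring.
rewrite big_ord_recr [in RHS]big_ord_recr /= !subnn !expr0.
under eq_bigr => i _ do
  rewrite (subSn (ltn_ord i : (i <= n)%N)) [y ^+ _.+1]exprS mulrCA.
under [in RHS]eq_bigr => i _ do
  rewrite (subSn (ltn_ord i : (i <= n)%N)) [y ^+ _.+1]exprS mulrCA.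
rewrite -!mulr_sumr IH gS.
set S := \sum_(i < n.+1) _.
ring.
Qed.

Lemma triangular_recursion_unique (R : pzRingType) (a u v : nat -> R) :
  a 0%N = 1 ->
  (forall m, (0 < m)%N ->
     \sum_(i < m) a i * u (m - i)%N = \sum_(i < m) a i * v (m - i)%N) ->
  forall i, (0 < i)%N -> u i = v i.
Proof.
move=> a0 rec; elim/ltn_ind => -[//|m] IH _.
have := rec m.+1 isT; rewrite !big_ord_recl /= a0 !mul1r !subn0.
under [in RHS]eq_bigr => i _ do
  rewrite /bump /= add1n subSS -IH ?ltnS ?leq_subr ?subn_gt0 //.
by move/addIr.
Qed.

Section DeltaSums.
Variables (R : comUnitRingType) (n : nat) (q : R) (nu : 'I_n.+1 -> R).
Hypothesis unit_q : q \is a GRing.unit.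
Hypothesis unit_nuB :
  forall r1 r2 : 'I_n.+1, r1 != r2 -> nu r1 - nu r2 \is a GRing.unit.

Local Notation t := (q ^- 2).
Local Notation e m := (elsym_in nu setT m).
Local Notation f j m := (elsym_in nu [set~ j] m).

Lemma card_setC1_ord (j : 'I_n.+1) : #|[set~ j]| = n.
Proof. by rewrite cardsC1 card_ord. Qed.

Lemma elsymT_0 j : e 0 = f j 0.
Proof. by rewrite !elsym_in0. Qed.

Lemma elsymT_S j m : e m.+1 = f j m.+1 - (- nu j) * f j m.
Proof. by rewrite (elsym_inD1 _ _ (in_setT j)) setTD mulNr opprK. Qed.

Lemma sum_elsym_setC1_eq (c : 'I_n.+1 -> R) (L : nat -> R) :
  (forall j0, c j0 * \prod_(r in [set~ j0]) (nu r - nu j0)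
     = \sum_(m < n.+1) L m * (- nu j0) ^+ (n - m)) ->
  forall m, (m <= n)%N -> \sum_j c j * f j m = L m.
Proof.
move=> values m le_mn; apply/eqP; rewrite -subr_eq0; apply/eqP.
apply: (@vandermonde_coef_eq0 R n (fun j => - nu j)
          (fun m => \sum_j c j * f j m - L m)) => // [i j ij|j0].
  by rewrite opprK addrC; apply: unit_nuB; rewrite eq_sym.
have interpolate : \sum_j c j * \prod_(r in [set~ j]) (- nu j0 + nu r)
    = c j0 * \prod_(r in [set~ j0]) (nu r - nu j0).
  rewrite (bigD1 j0) //= [X in _ + X]big1 ?addr0.
    by congr (_ * _); apply: eq_bigr => r _; rewrite addrC.
  move=> j jj0; rewrite (bigD1 j0) /= ?addNr ?mul0r ?mulr0 //.
  by rewrite in_setC1 eq_sym.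
under eq_bigr do rewrite mulrBl; rewrite sumrB -values -interpolate.
apply/eqP; rewrite subr_eq0; apply/eqP.
under eq_bigr do rewrite mulr_suml; rewrite exchange_big /=.
apply: eq_bigr => j _.
under [in RHS]eq_bigr => r _ do rewrite -[nu r]mul1r.
rewrite (prod_elsym_in nu _ _ (card_setC1_ord j)) mulr_sumr.
by apply: eq_bigr => i _; rewrite expr1n mul1r mulrA.
Qed.

Lemma delta_values j0 :
  delta q nu j0 * \prod_(r in [set~ j0]) (nu r - nu j0)
  = \sum_(m < n.+1) t ^+ m * f j0 m * (- nu j0) ^+ (n - m).
Proof.
rewrite -(prod_elsym_in nu _ _ (card_setC1_ord j0)) /delta.
rewrite [X in X * _](eq_bigl (fun r => r \in [set~ j0])); last first.
  by move=> r; rewrite in_setC1.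
rewrite -big_split; apply: eq_bigr => r; rewrite in_setC1 => rj0.
by rewrite /= -[nu r - nu j0]opprB mulrN divrK ?unit_nuB 1?eq_sym // opprB addrC.
Qed.

Lemma sum_delta_elsym m : (m <= n)%N ->
  \sum_j delta q nu j * f j m = (\sum_(m <= a < n.+1) t ^+ a) * e m.
Proof.
move=> le_mn.
apply: (sum_elsym_setC1_eq (L := fun m => (\sum_(m <= a < n.+1) t ^+ a) * e m))
  le_mn => j0.
rewrite delta_values /= (summation_by_parts
  (fun m => \sum_(m <= a < n.+1) t ^+ a) _ (elsymT_0 j0) (elsymT_S j0)).
rewrite big_geq // mul0r addr0.
by apply: eq_bigr => i _; rewrite big_ltn ?addrK.
Qed.

Lemma sum_delta_nu_elsym m :
  \sum_j (delta q nu j * nu j) * f j m = (\sum_(a < m.+1) t ^+ a) * e m.+1.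
Proof.
have [le_mn|lt_nm] := leqP m n; last first.
  rewrite elsym_in_gt_card ?mulr0; last by rewrite cardsT card_ord ltnS.
  by apply: big1 => j _; rewrite elsym_in_gt_card ?mulr0 ?card_setC1_ord.
apply: (sum_elsym_setC1_eq (L := fun m => (\sum_(a < m.+1) t ^+ a) * e m.+1))
  le_mn => j0.
rewrite mulrAC delta_values mulr_suml.
transitivity (\sum_(m < n.+2)
    (\sum_(a < m) t ^+ a) * e m * (- nu j0) ^+ (n.+1 - m)); last first.
  rewrite big_ord_recl big_ord0 !mul0r add0r.
  by apply: eq_bigr => i _; rewrite subSS.
rewrite (summation_by_parts (fun m => \sum_(a < m) t ^+ a) _
  (elsymT_0 j0) (elsymT_S j0)).
have f_top : f j0 n.+1 = 0 by rewrite elsym_in_gt_card ?card_setC1_ord.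
rewrite f_top mulr0 addr0 [RHS]big_ord_recr /= f_top mulr0 mul0r addr0.
apply: eq_bigr => i _.
rewrite big_ord_recr /= (subSn (ltn_ord i : (i <= n)%N)) [(- nu j0) ^+ _.+1]exprS.
set S := \sum_(a < i) _.
ring.
Qed.

Lemma sum_alt_elsym_pow j m :
  \sum_(i < m.+1) (-1) ^+ i * e i * nu j ^+ (m.+1 - i)
  = (-1) ^+ m * nu j * f j m.
Proof.
elim: m => [|m IH]; first by rewrite big_ord1 /= !elsym_in0; ring.
rewrite big_ord_recr /= subSS subSnn.
under eq_bigr => i _ do
  rewrite (subSn (ltnW (ltn_ord i) : (i <= m.+1)%N)) [nu j ^+ _.+1]exprS mulrCA.
rewrite -mulr_sumr IH (elsymT_S j) !exprS; ring.
Qed.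

Lemma qint_geometric m : q ^+ m * \sum_(a < m.+1) t ^+ a = qint q m.+1.
Proof.
rewrite /qint mulr_sumr; apply: eq_bigr => a _ /=.
by rewrite exprzDr // -exprnP -exprnN exprVn -exprM.
Qed.

Lemma delta_power_sums_solve_recursion m :
  \sum_(i < m.+1) (- q) ^+ i * e i *
     (q ^+ (m.+1 - i).-1 * \sum_j delta q nu j * nu j ^+ (m.+1 - i))
  = (-1) ^+ m * qint q m.+1 * e m.+1.
Proof.
transitivity (q ^+ m * \sum_j delta q nu j *
   \sum_(i < m.+1) (-1) ^+ i * e i * nu j ^+ (m.+1 - i)).
  under [in RHS]eq_bigr => j _ do rewrite mulr_sumr.
  rewrite exchange_big mulr_sumr; apply: eq_bigr => i _.
  move: (e i) => ei; rewrite !mulr_sumr; apply: eq_bigr => j _.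
  have -> : q ^+ m = q ^+ i * q ^+ (m - i) by rewrite -exprD subnKC // -ltnS.
  by rewrite (subSn (ltn_ord i : (i <= m)%N)) /= [(- q) ^+ _]exprNn; ring.
under eq_bigr => j _ do rewrite sum_alt_elsym_pow.
have -> : \sum_j delta q nu j * ((-1) ^+ m * nu j * f j m)
    = (-1) ^+ m * \sum_j (delta q nu j * nu j) * f j m.
  by rewrite mulr_sumr; apply: eq_bigr => j _; ring.
rewrite sum_delta_nu_elsym -qint_geometric.
set S := \sum_(a < m.+1) _.
ring.
Qed.

End DeltaSums.

Theorem lemma6p6 (R : comUnitRingType) (k : nat) (q : R) (nu : 'I_k -> R)
  (p : nat -> R) :
  (0 < k)%N ->
  q \is a GRing.unit ->
  (forall r1 r2 : 'I_k, r1 != r2 -> nu r1 - nu r2 \is a GRing.unit) ->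
  (forall m : nat, (0 < m)%N ->
     \sum_(i < m) (- q) ^+ i * elsym nu i * p (m - i)%N
       = (-1) ^+ m.-1 * qint q m * elsym nu m) ->
  (forall i : nat, (0 < i)%N ->
     p i = q ^+ i.-1 * \sum_(j < k) delta q nu j * nu j ^+ i)
  /\ q^-1 * \sum_(j < k) delta q nu j = q ^- k * qint q k.
Proof.
case: k nu => [|n] nu // _ unit_q unit_nuB rec; split.
  apply: (triangular_recursion_unique (a := fun i => (- q) ^+ i * elsym nu i)).
    by rewrite elsym_setT elsym_in0 mulr1.
  case=> // m _; rewrite rec //.
  under eq_bigr do rewrite elsym_setT.
  by rewrite elsym_setT delta_power_sums_solve_recursion.
have := sum_delta_elsym q unit_nuB (leq0n n).
under eq_bigr do rewrite elsym_in0 mulr1.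
rewrite elsym_in0 mulr1 big_mkord => ->.
rewrite -(qint_geometric unit_q) [q ^+ n.+1]exprSr [(_ * q)^-1]invrM ?unitrX //.
by rewrite -mulrA mulKr ?unitrX.
Qed.
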